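(* Let $G$ be a connected weighted multigraph on the vertex set $V$, $|V|=n\ge2$, with positive edge weights, weighted adjacency matrix $A$, spectral radius $\rho$ and Perron vector $p=(p_1,\dots,p_n)^{\mathsf T}$, and let $\Lambda=\rho I-A$. For $j\in V$ let $\bar Y(j)$ be the $n\times n$ matrix obtained from $(\Lambda_{jj})^{-1}$ by inserting a zero row $j$ and a zero column $j$, and let $\bar Y(j)^i$ denote its column indexed by $i$. Then for all distinct $i,j\in V$, the vector $\bar Y(j)^i\,p_j+\bar Y(i)^j\,p_i$ is a positive multiple of $p$.
   Context: $A=(a_{ij})$ has $a_{ij}$ equal to the sum of weights of the edges joining $i$ and $j$ (loops, multiple edges allowed). The Perron vector $p$ is the positive eigenvector of $A$ for $\rho$ with entries summing to 1. $\Lambda_{jj}$ is $\Lambda$ with row and column $j$ deleted (rows and columns indexed by $V\setminus\{j\}$); it is invertible. *)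

From HB Require Import structures.
From mathcomp Require Import all_boot all_order all_algebra.
From mathcomp Require Import reals.
From mathcomp Require Import complex.
Set Implicit Arguments. Unset Strict Implicit. Unset Printing Implicit Defensive.
Import Order.TTheory GRing.Theory Num.Theory.
Local Open Scope ring_scope.

(* Weighted adjacency matrix of a weighted multigraph with positive edge
   weights (loops and multiple edges allowed): a_ij = total weight of the
   edges joining i and j, so A is symmetric with nonnegative entries, and
   i,j are adjacent iff a_ij > 0. *)
Definition weighted_adjacency (R : realType) (m : nat) (A : 'M[R]_m) : Prop :=
  A^T = A /\ forall i j, 0 <= A i j.

Definition adj_rel (R : realType) (m : nat) (A : 'M[R]_m) : rel 'I_m :=
  fun i j => 0 < A i j.

Definition connected_graph (R : realType) (m : nat) (A : 'M[R]_m) : Prop :=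
  forall i j : 'I_m, connect (adj_rel A) i j.

Definition cplx_mx (R : realType) (m : nat) (A : 'M[R]_m) : 'M[R[i]]_m :=
  map_mx (fun x : R => x%:C%C) A.

Definition spectral_radius (R : realType) (m : nat) (A : 'M[R]_m) (rho : R) : Prop :=
  (exists z : R[i], eigenvalue (cplx_mx A) z /\ `|z| = rho%:C%C) /\
  (forall z : R[i], eigenvalue (cplx_mx A) z -> `|z| <= rho%:C%C).

Definition perron_vector (R : realType) (m : nat) (A : 'M[R]_m) (rho : R)
    (p : 'cV[R]_m) : Prop :=
  A *m p = rho *: p /\ (forall i, 0 < p i 0) /\ \sum_i p i 0 = 1.

Definition Lam (R : realType) (m : nat) (A : 'M[R]_m) (rho : R) : 'M[R]_m :=
  rho%:M - A.

Definition Lam_del (R : realType) (m : nat) (A : 'M[R]_m.+1) (rho : R)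
    (j : 'I_m.+1) : 'M[R]_m :=
  row' j (col' j (Lam A rho)).

Definition Ybar (R : realType) (m : nat) (A : 'M[R]_m.+1) (rho : R)
    (j : 'I_m.+1) : 'M[R]_m.+1 :=
  \matrix_(a, b)
    match unlift j a, unlift j b with
    | Some a', Some b' => invmx (Lam_del A rho j) a' b'
    | _, _ => 0
    end.

From HB Require Import structures.
From mathcomp Require Import all_boot all_order all_algebra.
From mathcomp Require Import reals.
From mathcomp Require Import complex.
From mathcomp Require Import ring.
Import Order.TTheory GRing.Theory Num.Theory.
Local Open Scope ring_scope.

(* Writing x = (p_k u_k)_k, the quadratic form of Lambda = rho I - A is
   x^T Lambda x = 1/2 sum_{k,l} a_kl p_k p_l (u_k - u_l)^2, because A p = rho p.
   It is therefore nonnegative, and by connectivity it vanishes only on the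
   multiples of p.  Consequently Lambda_jj is invertible, the column
   y = Ybar(j)^i satisfies (Lambda y)_k = delta_ki off j and y^T Lambda y = y_i > 0,
   and p^T Lambda = 0 forces (Lambda y)_j = -p_i / p_j.  Hence
   v = p_j Ybar(j)^i + p_i Ybar(i)^j has Lambda v = 0, so v is a multiple of p,
   positive since v_i = p_j y_i > 0. *)

Lemma connect_invariant {T : finType} {T' : Type} {e : rel T} (u : T -> T') :
  (forall k l, e k l -> u k = u l) -> forall k l, connect e k l -> u k = u l.
Proof.
move=> u_e k l /connectP [s]; elim: s k => [k _ -> //|a s IHs k] /=.
by case/andP=> /u_e -> /IHs.
Qed.

Section PerronQuadraticForm.
Variables (R : realType) (n : nat) (A : 'M[R]_n.+1) (rho : R) (p : 'cV[R]_n.+1).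
Hypotheses (A_sym : A^T = A) (A_ge0 : forall k l, 0 <= A k l).
Hypotheses (A_conn : connected_graph A) (A_p : A *m p = rho *: p).
Hypothesis p_gt0 : forall k, 0 < p k 0.

Local Notation L := (Lam A rho).

Lemma A_symE k l : A k l = A l k.
Proof. by rewrite -{1}A_sym mxE. Qed.

Lemma A_pE k : \sum_l A k l * p l 0 = rho * p k 0.
Proof.
have := congr1 (fun M : 'cV[R]_n.+1 => M k 0) A_p; rewrite !mxE => <-.
by apply: eq_bigr.
Qed.

Lemma Lam_mulE (x : 'cV[R]_n.+1) k :
  (L *m x) k 0 = rho * x k 0 - \sum_l A k l * x l 0.
Proof. by rewrite /Lam mulmxBl mul_scalar_mx !mxE. Qed.

Lemma Lam_perron_orth (x : 'cV[R]_n.+1) : \sum_k p k 0 * (L *m x) k 0 = 0.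
Proof.
have pL : p^T *m L = 0.
  have L_sym : L^T = L by rewrite /Lam linearB /= tr_scalar_mx A_sym.
  by rewrite -L_sym -trmx_mul /Lam mulmxBl mul_scalar_mx A_p subrr trmx0.
transitivity ((p^T *m (L *m x)) 0 0).
  by rewrite mxE; apply: eq_bigr => k _; rewrite !mxE.
by rewrite mulmxA pL mul0mx mxE.
Qed.

Definition qform (x : 'cV[R]_n.+1) := \sum_k x k 0 * (L *m x) k 0.

Lemma ground_state_identity (u : 'I_n.+1 -> R) :
  2 * \sum_k (p k 0 * u k) * (rho * (p k 0 * u k) - \sum_l A k l * (p l 0 * u l))
  = \sum_k \sum_l A k l * p k 0 * p l 0 * (u k - u l) ^+ 2.
Proof.
have diag_l : \sum_k \sum_l A k l * p k 0 * p l 0 * u k ^+ 2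
    = \sum_k rho * (p k 0 * u k) ^+ 2.
  apply: eq_bigr => k _.
  transitivity (p k 0 * u k ^+ 2 * \sum_l A k l * p l 0).
    by rewrite mulr_sumr; apply: eq_bigr => l _; ring.
  by rewrite A_pE; ring.
have diag_r : \sum_k \sum_l A k l * p k 0 * p l 0 * u l ^+ 2
    = \sum_k rho * (p k 0 * u k) ^+ 2.
  rewrite exchange_big -diag_l /=; apply: eq_bigr => k _; apply: eq_bigr => l _.
  by rewrite A_symE; ring.
have expand : \sum_k \sum_l A k l * p k 0 * p l 0 * (u k - u l) ^+ 2 =
    \sum_k \sum_l A k l * p k 0 * p l 0 * u k ^+ 2
    + \sum_k \sum_l A k l * p k 0 * p l 0 * u l ^+ 2
    - 2 * \sum_k (p k 0 * u k) * \sum_l A k l * (p l 0 * u l).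
  rewrite mulr_sumr -!big_split -sumrB /=; apply: eq_bigr => k _.
  rewrite -!big_split /= !mulr_sumr -sumrB; apply: eq_bigr => l _.
  ring.
rewrite expand diag_l diag_r !mulr_sumr -big_split -sumrB /=.
by apply: eq_bigr => k _; ring.
Qed.

Lemma qformE x : 2 * qform x =
  \sum_k \sum_l A k l * p k 0 * p l 0 * (x k 0 / p k 0 - x l 0 / p l 0) ^+ 2.
Proof.
have xE k : x k 0 = p k 0 * (x k 0 / p k 0) by rewrite mulrC divfK ?gt_eqF.
rewrite -ground_state_identity; congr (_ * _); apply: eq_bigr => k _.
rewrite Lam_mulE -!xE; congr (_ * (_ - _)); apply: eq_bigr => l _.
by rewrite -xE.
Qed.

Lemma qform_term_ge0 (x : 'cV[R]_n.+1) k l :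
  0 <= A k l * p k 0 * p l 0 * (x k 0 / p k 0 - x l 0 / p l 0) ^+ 2.
Proof. by rewrite mulr_ge0 ?sqr_ge0 // !mulr_ge0 ?A_ge0 ?ltW. Qed.

Lemma qform_ge0 x : 0 <= qform x.
Proof.
rewrite -(pmulr_rge0 _ (ltr0Sn R 1)) qformE.
by do 2!apply: sumr_ge0 => ? _; apply: qform_term_ge0.
Qed.

Lemma qform_eq0_edge x k l :
  qform x = 0 -> 0 < A k l -> x k 0 / p k 0 = x l 0 / p l 0.
Proof.
move=> qx0 Akl; have := qformE x; rewrite qx0 mulr0 => /esym sum0.
have term_ge0 := qform_term_ge0 x.
have row0 :=
  psumr_eq0P (fun a _ => sumr_ge0 _ (fun b _ => term_ge0 a b)) sum0 (i := k) isT.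
move: (psumr_eq0P (fun b _ => term_ge0 k b) row0 (i := l) isT) => /eqP.
rewrite !mulf_eq0 (gt_eqF Akl) !(gt_eqF (p_gt0 _)) /= orbb subr_eq0.
by move/eqP.
Qed.

Lemma qform_le0_propto x k : qform x <= 0 -> x = (x k 0 / p k 0) *: p.
Proof.
move=> qx_le0; have qx0 : qform x = 0 by apply/eqP; rewrite eq_le qx_le0 qform_ge0.
apply/matrixP => l z; rewrite (ord1 z) mxE.
have u_edge a b : adj_rel A a b -> x a 0 / p a 0 = x b 0 / p b 0.
  exact: qform_eq0_edge.
rewrite (connect_invariant _ u_edge _ _ (A_conn k l)).
by rewrite divfK ?gt_eqF.
Qed.

Lemma qform_le0_eq0 x j : qform x <= 0 -> x j 0 = 0 -> x = 0.
Proof. by move=> /(qform_le0_propto _ j) xE xj0; rewrite xE xj0 mul0r scale0r. Qed.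

Lemma Lam_del_unit j : Lam_del A rho j \in unitmx.
Proof.
rewrite unitmxE unitfE; apply/negP => /det0P [v v_neq0 vL0].
pose x : 'cV[R]_n.+1 := \col_k oapp (fun a => v 0 a) 0 (unlift j k).
have x_j : x j 0 = 0 by rewrite mxE unlift_none.
have x_lift a : x (lift j a) 0 = v 0 a by rewrite mxE liftK.
have Lx_lift a : (L *m x) (lift j a) 0 = 0.
  rewrite mxE (bigD1_ord j) //= x_j mulr0 add0r.
  transitivity ((v *m Lam_del A rho j) 0 a); last by rewrite vL0 mxE.
  rewrite mxE; apply: eq_bigr => b _.
  by rewrite x_lift /Lam_del !mxE eq_sym A_symE mulrC.
have : qform x <= 0.
  rewrite /qform (bigD1_ord j) //= x_j mul0r add0r big1 // => a _.
  by rewrite Lx_lift mulr0.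
move=> /qform_le0_eq0 /(_ x_j) x0; case/eqP: v_neq0.
by apply/matrixP => z a; rewrite (ord1 z) -x_lift x0 !mxE.
Qed.

Section YbarColumn.
Variables (i j : 'I_n.+1).
Hypothesis neq_ij : i != j.
Local Notation y := (col i (Ybar A rho j)).

Lemma col_Ybar_j : y j 0 = 0.
Proof. by rewrite !mxE unlift_none. Qed.

Lemma Lam_col_Ybar k : k != j -> (L *m y) k 0 = (k == i)%:R.
Proof.
case: (unliftP j i) neq_ij => [i' iE _|->]; last by rewrite eqxx.
case: (unliftP j k) => [b ->|->]; last by rewrite eqxx.
move=> _; rewrite mxE (bigD1_ord j) //= col_Ybar_j mulr0 add0r iE (inj_eq lift_inj).
transitivity ((Lam_del A rho j *m invmx (Lam_del A rho j)) b i').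
  by rewrite mxE; apply: eq_bigr => a _; rewrite !mxE !liftK.
by rewrite mulmxV ?Lam_del_unit // mxE.
Qed.

Lemma qform_col_Ybar : qform y = y i 0.
Proof.
rewrite /qform (bigD1 j) //= col_Ybar_j mul0r add0r (bigD1 i) //=.
rewrite (Lam_col_Ybar i neq_ij) eqxx mulr1 big1 ?addr0 // => k /andP [kj ki].
by rewrite Lam_col_Ybar // (negbTE ki) mulr0.
Qed.

Lemma Lam_col_Ybar_j : p j 0 * (L *m y) j 0 = - p i 0.
Proof.
have := Lam_perron_orth y; rewrite (bigD1 j) //= (bigD1 i) //=.
rewrite (Lam_col_Ybar i neq_ij) eqxx mulr1 big1 ?addr0.
  by move/eqP; rewrite addr_eq0 => /eqP.
by move=> k /andP [kj ki]; rewrite Lam_col_Ybar // (negbTE ki) mulr0.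
Qed.

Lemma col_Ybar_gt0 : 0 < y i 0.
Proof.
rewrite ltNge; apply/negP; rewrite -qform_col_Ybar => /qform_le0_eq0 /(_ col_Ybar_j).
move=> y0; have := Lam_col_Ybar i neq_ij; rewrite eqxx y0 mulmx0 mxE => /eqP.
by rewrite eq_sym oner_eq0.
Qed.

End YbarColumn.

Lemma Ybar_cols_propto_perron i j : i != j ->
  exists c : R, 0 < c /\
    p j 0 *: col i (Ybar A rho j) + p i 0 *: col j (Ybar A rho i) = c *: p.
Proof.
move=> neq_ij; have neq_ji : j != i by rewrite eq_sym.
set v := _ + _.
have vE k :
    v k 0 = p j 0 * col i (Ybar A rho j) k 0 + p i 0 * col j (Ybar A rho i) k 0.
  by rewrite !mxE.
have Lv0 k : (L *m v) k 0 = 0.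
  have -> : (L *m v) k 0 = p j 0 * (L *m col i (Ybar A rho j)) k 0
                          + p i 0 * (L *m col j (Ybar A rho i)) k 0.
    by rewrite mulmxDr -!scalemxAr !mxE.
  case: (eqVneq k j) => [->|kj].
    by rewrite Lam_col_Ybar_j // Lam_col_Ybar // eqxx mulr1 addNr.
  case: (eqVneq k i) => [->|ki].
    by rewrite Lam_col_Ybar_j // Lam_col_Ybar // eqxx mulr1 addrN.
  by rewrite !Lam_col_Ybar // (negbTE ki) (negbTE kj) !mulr0 addr0.
have /(qform_le0_propto _ i) vp : qform v <= 0.
  by rewrite /qform big1 // => k _; rewrite Lv0 mulr0.
exists (v i 0 / p i 0); split=> //.
rewrite divr_gt0 // vE [col j _ i 0]col_Ybar_j mulr0 addr0.
exact: mulr_gt0 (p_gt0 j) (col_Ybar_gt0 _ _ neq_ij).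
Qed.

End PerronQuadraticForm.

Theorem lemma11 (R : realType) (n : nat) (A : 'M[R]_n.+1) (rho : R)
    (p : 'cV[R]_n.+1) :
  (1 <= n)%N ->
  weighted_adjacency A ->
  connected_graph A ->
  spectral_radius A rho ->
  perron_vector A rho p ->
  forall i j : 'I_n.+1, i != j ->
  exists c : R, 0 < c /\
    p j 0 *: col i (Ybar A rho j) + p i 0 *: col j (Ybar A rho i) = c *: p.
Proof.
move=> _ [A_sym A_ge0] A_conn _ [A_p [p_gt0 _]].
exact: Ybar_cols_propto_perron.
Qed.
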